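(* Let $n\ge 2$, $\zeta=2\pi/n$, $s_k=2\sin(k\pi/n)$, consider $V$ as in the context with $\sigma=1$, and define for $a>0$ $$S(a)=\frac{1}{as_1}-\frac{1}{2s_1^2}\sum_{k=1}^{n-1}W'(a^2s_k^2)\,s_k^2.$$ Then $S(a)\to\infty$ as $a\to0^+$ and $S(a)\to0$ as $a\to+\infty$; consequently there is at least one $\alpha>0$ with $S(\alpha)=1$, and for any such $\alpha$ the configuration $\mathbf a=(a_1,\dots,a_n)$ with $a_j=\alpha e^{ij\zeta}$ (identifying $\mathbb R^2$ with $\mathbb C$) is a critical point of $V$ (a circular equilibrium).
   Context: For $u=(u_1,\dots,u_n)\in(\mathbb R^2)^n$ let $$V(u)=\sum_{j=1}^{n-1}U(|u_{j+1}-u_j|^2)+U(|u_n-u_1|^2)+\sum_{1\le j<k\le n}W(|u_j-u_k|^2),$$ where $U(x)=x-2x^{1/2}$ and $W\in C^2((0,\infty))$ satisfies $\lim_{x\to0}W(x)=\lim_{x\to0}(-W'(x))=+\infty$ and $\lim_{x\to\infty}W(x)=\lim_{x\to\infty}W'(x)=0$. $V$ is defined on $\Omega=\{u\in\mathbb R^{2n}:u_j\ne u_k\text{ for }j\ne k\}$. *)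

From Stdlib Require Import Reals Lra Lia.
From Coquelicot Require Import Coquelicot.
Open Scope R_scope.

Definition sqdist (p q : R * R) : R :=
  (fst p - fst q) ^ 2 + (snd p - snd q) ^ 2.

Definition U (x : R) : R := x - 2 * sqrt x.

(* A configuration u = (u_1,...,u_n) is a function nat -> R*R, indices 1..n. *)
Definition V (W : R -> R) (n : nat) (u : nat -> R * R) : R :=
  sum_n_m (fun j => U (sqdist (u (S j)) (u j))) 1 (n - 1)
  + U (sqdist (u n) (u 1%nat))
  + sum_n_m (fun j => sum_n_m (fun k => W (sqdist (u j) (u k))) (S j) n) 1 n.

Definition in_Omega (n : nat) (u : nat -> R * R) : Prop :=
  forall j k : nat, (1 <= j <= n)%nat -> (1 <= k <= n)%nat -> j <> k -> u j <> u k.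

Definition shift (u : nat -> R * R) (j : nat) (c : bool) (t : R) : nat -> R * R :=
  fun i => if Nat.eqb i j then
             (if c then (fst (u i), snd (u i) + t) else (fst (u i) + t, snd (u i)))
           else u i.

Definition is_critical_point (W : R -> R) (n : nat) (u : nat -> R * R) : Prop :=
  forall (j : nat) (c : bool), (1 <= j <= n)%nat ->
    is_derive (fun t => V W n (shift u j c t)) 0 0.

Definition s (n k : nat) : R := 2 * sin (INR k * PI / INR n).

Definition Sfun (W : R -> R) (n : nat) (a : R) : R :=
  / (a * s n 1) - / (2 * (s n 1) ^ 2) *
    sum_n_m (fun k => Derive W (a ^ 2 * (s n k) ^ 2) * (s n k) ^ 2) 1 (n - 1).

Definition circ_config (n : nat) (alpha : R) : nat -> R * R :=
  fun j => (alpha * cos (INR j * (2 * PI / INR n)),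
            alpha * sin (INR j * (2 * PI / INR n))).

(* Differentiating V along one coordinate of one point u_j gives the chain
   contribution 2 U'(|u_j - u_k|^2) (u_j - u_k) from the two cyclic neighbours
   and 2 W'(|u_j - u_k|^2) (u_j - u_k) from every other point.  On the regular
   n-gon of radius a every point sees the others at the offsets m = 1, ..., n-1,
   at distances a s_m; the tangential parts of offsets m and n - m cancel, and
   what is left is 2 a s_1^2 (1 - S(a)) times the unit vector e^{ij zeta}.  So
   the n-gon is critical exactly when S(a) = 1.  Such an a exists by the
   intermediate value theorem: near 0 all the W'-terms are nonpositive, so
   S(a) >= 1/(a s_1) -> oo, while at oo both terms of S tend to 0. *)

From Stdlib Require Import Reals Lra Lia.
From Coquelicot Require Import Coquelicot.
Open Scope R_scope.

(* Stated over R so that the pointwise goals are equations in R, where [ring]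
   and [field] apply. *)
Lemma sum_n_m_ext_loc_R (f g : nat -> R) a b :
  (forall k, (a <= k <= b)%nat -> f k = g k) -> sum_n_m f a b = sum_n_m g a b.
Proof. apply sum_n_m_ext_loc. Qed.

Lemma sum_n_m_Rplus (f g : nat -> R) a b :
  sum_n_m (fun k => f k + g k) a b = sum_n_m f a b + sum_n_m g a b.
Proof. exact (sum_n_m_plus (G:=R_AbelianMonoid) f g a b). Qed.

Lemma sum_n_m_Rmult_l (c : R) (f : nat -> R) a b :
  sum_n_m (fun k => c * f k) a b = c * sum_n_m f a b.
Proof. exact (sum_n_m_mult_l (K:=R_Ring) c f a b). Qed.

Lemma sum_n_m_Ropp (f : nat -> R) a b :
  sum_n_m (fun k => - f k) a b = - sum_n_m f a b.
Proof.
  rewrite <- (Rmult_1_l (sum_n_m f a b)), Ropp_mult_distr_l, <- sum_n_m_Rmult_l.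
  apply sum_n_m_ext; intro k. now rewrite <- Ropp_mult_distr_l, Rmult_1_l.
Qed.

Lemma sum_n_m_eq0 (f : nat -> R) a b :
  (forall k, (a <= k <= b)%nat -> f k = 0) -> sum_n_m f a b = 0.
Proof.
  intro H. rewrite (sum_n_m_ext_loc f (fun _ => zero) a b H).
  exact (sum_n_m_const_zero (G:=R_AbelianMonoid) a b).
Qed.

Lemma sum_n_m_Chasles_R (f : nat -> R) a m b :
  (a <= S m)%nat -> (m <= b)%nat ->
  sum_n_m f a b = sum_n_m f a m + sum_n_m f (S m) b.
Proof. exact (sum_n_m_Chasles (G:=R_AbelianMonoid) f a m b). Qed.

Lemma sum_n_m_eqb (f : nat -> R) a b j :
  sum_n_m (fun i => if Nat.eqb i j then f i else 0) a b =
  if (Nat.leb a j && Nat.leb j b)%bool then f j else 0.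
Proof.
  induction b as [|b IH].
  - destruct a as [|a].
    + rewrite sum_n_n.
      destruct (Nat.eqb_spec 0 j), (Nat.leb_spec j 0); simpl; subst; reflexivity || lia.
    + rewrite sum_n_m_zero by lia.
      destruct (Nat.leb_spec (S a) j), (Nat.leb_spec j 0); simpl; reflexivity || lia.
  - destruct (Nat.leb_spec a (S b)).
    + rewrite sum_n_Sm, IH by lia. change plus with Rplus.
      destruct (Nat.eqb_spec (S b) j), (Nat.leb_spec a j), (Nat.leb_spec j b),
        (Nat.leb_spec j (S b)); simpl; subst; lra || lia.
    + rewrite sum_n_m_zero by lia.
      destruct (Nat.leb_spec a j), (Nat.leb_spec j (S b)); simpl; reflexivity || lia.
Qed.

Lemma sum_n_m_rev (f : nat -> R) a b :
  sum_n_m f a b = sum_n_m (fun i => f (a + b - i)%nat) a b.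
Proof.
  destruct (Nat.le_gt_cases a b) as [H|H]; [|now rewrite !sum_n_m_zero].
  replace b with (a + (b - a))%nat by lia. generalize (b - a)%nat as d. clear b H.
  intro d; revert a; induction d as [|d IH]; intro a.
  - rewrite Nat.add_0_r, !sum_n_n. f_equal; lia.
  - rewrite (sum_Sn_m f) by lia.
    replace (a + S d)%nat with (S (a + d)) by lia.
    rewrite (sum_n_Sm (fun i => f (a + S (a + d) - i)%nat)) by lia.
    replace (S (a + d)) with (S a + d)%nat at 1 by lia.
    rewrite IH. replace (S a + d)%nat with (S (a + d)) by lia.
    rewrite <- sum_n_m_S. change plus with Rplus.
    replace (a + S (a + d) - S (a + d))%nat with a by lia.
    now rewrite Rplus_comm.
Qed.

Lemma sum_n_m_periodic_shift (f : nat -> R) p j :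
  (forall k, f (k + p)%nat = f k) ->
  sum_n_m (fun m => f (j + m)%nat) 1 p = sum_n_m f 1 p.
Proof.
  intro Hper. induction j as [|j IH]; [reflexivity|].
  destruct p as [|p]; [now rewrite !sum_n_m_zero by lia|].
  rewrite <- IH.
  rewrite (sum_n_m_ext (fun m => f (S j + m)%nat) (fun m => f (j + S m)%nat))
    by (intro; f_equal; lia).
  rewrite (sum_n_m_S (fun m => f (j + m)%nat)), sum_n_Sm, (sum_Sn_m _ 1) by lia.
  change plus with Rplus.
  replace (j + S (S p))%nat with (S j + S p)%nat by lia.
  rewrite Hper, Nat.add_1_r. apply Rplus_comm.
Qed.

Lemma sum_n_m_fun_closed (Q : (R -> R) -> R -> Prop) :
  (forall f g l, (forall t, f t = g t) -> Q f l -> Q g l) ->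
  Q (fun _ => 0) 0 ->
  (forall f g l m, Q f l -> Q g m -> Q (fun t => f t + g t) (l + m)) ->
  forall (f : nat -> R -> R) (l : nat -> R) a b,
  (forall k, (a <= k <= b)%nat -> Q (f k) (l k)) ->
  Q (fun t => sum_n_m (fun k => f k t) a b) (sum_n_m l a b).
Proof.
  intros Qext Q0 Qplus f l a b.
  induction b as [|b IH]; intro Hf.
  - destruct a as [|a].
    + rewrite sum_n_n. apply (Qext (f 0%nat)); [|apply Hf; lia].
      intro t; now rewrite sum_n_n.
    + rewrite sum_n_m_zero by lia. apply (Qext (fun _ => 0)); [|exact Q0].
      intro t; now rewrite sum_n_m_zero by lia.
  - destruct (Nat.leb_spec a (S b)).
    + rewrite sum_n_Sm by lia.
      apply (Qext (fun t => sum_n_m (fun k => f k t) a b + f (S b) t)).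
      { intro t; now rewrite sum_n_Sm by lia. }
      apply Qplus; [apply IH; intros; apply Hf; lia | apply Hf; lia].
    + rewrite sum_n_m_zero by lia. apply (Qext (fun _ => 0)); [|exact Q0].
      intro t; now rewrite sum_n_m_zero by lia.
Qed.

Lemma is_derive_sum_n_m (f : nat -> R -> R) (df : nat -> R) a b x :
  (forall k, (a <= k <= b)%nat -> is_derive (f k) x (df k)) ->
  is_derive (fun t => sum_n_m (fun k => f k t) a b) x (sum_n_m df a b).
Proof.
  apply (sum_n_m_fun_closed (fun g l => is_derive g x l)).
  - intros g h l Hgh Hg. exact (is_derive_ext g h x l Hgh Hg).
  - exact (is_derive_const (K:=R_AbsRing) (V:=R_NormedModule) 0 x).
  - intros g h l m Hg Hh. exact (is_derive_plus g h x l m Hg Hh).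
Qed.

Lemma is_lim_sum_n_m (f : nat -> R -> R) (l : nat -> R) a b x :
  (forall k, (a <= k <= b)%nat -> is_lim (f k) x (l k)) ->
  is_lim (fun t => sum_n_m (fun k => f k t) a b) x (sum_n_m l a b).
Proof.
  apply (sum_n_m_fun_closed (fun g m => is_lim g x m)).
  - intros g h m Hgh Hg. exact (is_lim_ext g h x m Hgh Hg).
  - apply is_lim_const.
  - intros g h lg lh Hg Hh. exact (is_lim_plus' g h x lg lh Hg Hh).
Qed.

Definition coord (c : bool) (p : R * R) : R := if c then snd p else fst p.

Definition dcoord (c : bool) (u : nat -> R * R) (a b : nat) : R :=
  coord c (u a) - coord c (u b).

Definition kron (a j : nat) : R := if Nat.eqb a j then 1 else 0.

Definition cycle_pred (n j : nat) : nat := if Nat.eqb j 1 then n else (j - 1)%nat.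
Definition cycle_succ (n j : nat) : nat := if Nat.eqb j n then 1%nat else S j.

Definition U' (x : R) : R := 1 - / sqrt x.

(* The term k = j of the sum vanishes whatever the junk value [Derive W 0],
   since [dcoord c u j j = 0]. *)
Definition grad_V (W : R -> R) (n : nat) (u : nat -> R * R) (j : nat) (c : bool) : R :=
  2 * (U' (sqdist (u j) (u (cycle_pred n j))) * dcoord c u j (cycle_pred n j)
       + U' (sqdist (u j) (u (cycle_succ n j))) * dcoord c u j (cycle_succ n j))
  + 2 * sum_n_m (fun k => Derive W (sqdist (u j) (u k)) * dcoord c u j k) 1 n.

Lemma sqdist_comm p q : sqdist p q = sqdist q p.
Proof. unfold sqdist; ring. Qed.

Lemma dcoord_anti c u a b : dcoord c u b a = - dcoord c u a b.
Proof. unfold dcoord; ring. Qed.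

Lemma sqdist_pos p q : p <> q -> 0 < sqdist p q.
Proof.
  destruct p as [p1 p2], q as [q1 q2]; unfold sqdist; simpl; intro Hpq.
  destruct (Req_dec p1 q1) as [->|H1].
  - assert (p2 <> q2) by congruence.
    assert (0 < (p2 - q2) ^ 2) by (apply pow2_gt_0; lra). lra.
  - assert (0 < (p1 - q1) ^ 2) by (apply pow2_gt_0; lra).
    assert (0 <= (p2 - q2) ^ 2) by apply pow2_ge_0. lra.
Qed.

Lemma sqdist_shift u j c a b t :
  sqdist (shift u j c t a) (shift u j c t b) =
  sqdist (u a) (u b) + 2 * t * ((kron a j - kron b j) * dcoord c u a b)
  + t ^ 2 * (kron a j - kron b j) ^ 2.
Proof.
  unfold sqdist, shift, kron, dcoord, coord.
  destruct (Nat.eqb a j), (Nat.eqb b j), c; simpl; ring.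
Qed.

Lemma is_derive_sqdist_shift (F : R -> R) dF u j c a b :
  is_derive F (sqdist (u a) (u b)) dF ->
  is_derive (fun t => F (sqdist (shift u j c t a) (shift u j c t b))) 0
    ((kron a j - kron b j) * (2 * (dF * dcoord c u a b))).
Proof.
  intro HF.
  set (D := (kron a j - kron b j) * dcoord c u a b).
  set (C := (kron a j - kron b j) ^ 2).
  apply (is_derive_ext (fun t => F (sqdist (u a) (u b) + 2 * t * D + t ^ 2 * C))).
  { intro t. now rewrite sqdist_shift. }
  replace ((kron a j - kron b j) * (2 * (dF * dcoord c u a b))) with (scal (2 * D) dF)
    by (unfold scal, D; simpl; unfold mult; simpl; ring).
  apply (is_derive_comp F (fun t => sqdist (u a) (u b) + 2 * t * D + t ^ 2 * C)).
  - replace (sqdist (u a) (u b) + 2 * 0 * D + 0 ^ 2 * C) with (sqdist (u a) (u b)) by ring.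
    exact HF.
  - auto_derive; [exact I | ring].
Qed.

Lemma is_derive_U x : 0 < x -> is_derive U x (U' x).
Proof.
  intro Hx. unfold U, U'. auto_derive; [exact Hx|].
  field. apply Rgt_not_eq, sqrt_lt_R0, Hx.
Qed.

Lemma kron_diff_mult_split (f : nat -> nat -> R) j a b :
  (kron a j - kron b j) * f a b =
  (if Nat.eqb a j then f a b else 0) + - (if Nat.eqb b j then f a b else 0).
Proof. unfold kron. destruct (Nat.eqb a j), (Nat.eqb b j); ring. Qed.

Lemma sum_n_m_ltb (f : nat -> R) j n :
  (j <= S n)%nat ->
  sum_n_m (fun a => if Nat.ltb a j then f a else 0) 1 n = sum_n_m f 1 (j - 1).
Proof.
  intro Hj.
  rewrite (sum_n_m_Chasles_R _ 1 (j - 1) n) by lia.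
  rewrite (sum_n_m_eq0 _ (S (j - 1)) n), Rplus_0_r.
  - apply sum_n_m_ext_loc; intros a Ha. destruct (Nat.ltb_spec a j); reflexivity || lia.
  - intros a Ha. destruct (Nat.ltb_spec a j); reflexivity || lia.
Qed.

Section Antisymmetric.
Variable n j : nat.
Hypothesis Hj : (1 <= j <= n)%nat.
Variable G : nat -> nat -> R.
Hypothesis G_anti : forall a b, G b a = - G a b.

Lemma sum_pairs_antisym :
  sum_n_m (fun a => sum_n_m (fun b => (kron a j - kron b j) * G a b) (S a) n) 1 n =
  sum_n_m (G j) 1 n.
Proof.
  rewrite (sum_n_m_ext_loc_R _ (fun a => (if Nat.eqb a j then sum_n_m (G a) (S a) n else 0)
      + - (if Nat.ltb a j then G a j else 0))).
  2:{ intros a Ha.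
      rewrite (sum_n_m_ext _ _ _ _ (kron_diff_mult_split G j a)).
      rewrite sum_n_m_Rplus, sum_n_m_Ropp, sum_n_m_eqb. f_equal.
      - destruct (Nat.eqb a j); [reflexivity|]. apply sum_n_m_eq0; auto.
      - f_equal. destruct (Nat.leb_spec (S a) j), (Nat.leb_spec j n), (Nat.ltb_spec a j);
          simpl; reflexivity || lia. }
  rewrite sum_n_m_Rplus, sum_n_m_Ropp, sum_n_m_eqb, (sum_n_m_ltb (fun a => G a j)) by lia.
  destruct (Nat.leb_spec 1 j), (Nat.leb_spec j n); simpl; try lia.
  rewrite (sum_n_m_Chasles_R (G j) 1 (j - 1) n) by lia.
  replace (S (j - 1)) with j by lia.
  rewrite (sum_Sn_m (G j) j n) by lia. change plus with Rplus.
  assert (Hjj : G j j = 0) by (pose proof (G_anti j j); lra).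
  rewrite Hjj, <- sum_n_m_Ropp.
  rewrite (sum_n_m_ext (fun a => - G a j) (G j))
    by (intro; now rewrite G_anti, Ropp_involutive).
  ring.
Qed.

Lemma sum_cycle_edges_antisym :
  (2 <= n)%nat ->
  sum_n_m (fun i => (kron (S i) j - kron i j) * G (S i) i) 1 (n - 1)
  + (kron n j - kron 1 j) * G n 1%nat =
  G j (cycle_pred n j) + G j (cycle_succ n j).
Proof.
  intro Hn.
  rewrite (sum_n_m_ext_loc_R _ (fun i => (if Nat.eqb i (j - 1) then G j (j - 1)%nat else 0)
      + (if Nat.eqb i j then G j (S j) else 0))).
  2:{ intros i Hi. unfold kron.
      destruct (Nat.eqb_spec (S i) j), (Nat.eqb_spec i (j - 1)), (Nat.eqb_spec i j);
        try lia.
      - subst j. replace (S i - 1)%nat with i by lia. ring.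
      - subst i. rewrite (G_anti j (S j)). ring.
      - ring. }
  rewrite sum_n_m_Rplus, !sum_n_m_eqb.
  unfold kron, cycle_pred, cycle_succ.
  repeat match goal with
  | |- context [Nat.eqb ?a ?b] => destruct (Nat.eqb_spec a b); try lia
  | |- context [Nat.leb ?a ?b] => destruct (Nat.leb_spec a b); try lia
  end; simpl; subst; rewrite ?(G_anti 1%nat n); ring.
Qed.

End Antisymmetric.

Lemma is_derive_V_shift W n u j c :
  (2 <= n)%nat -> (1 <= j <= n)%nat ->
  (forall x, 0 < x -> ex_derive W x) -> in_Omega n u ->
  is_derive (fun t => V W n (shift u j c t)) 0 (grad_V W n u j c).
Proof.
  intros Hn Hj HW Hu.
  assert (Hpos : forall a b, (1 <= a <= n)%nat -> (1 <= b <= n)%nat -> a <> b ->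
             0 < sqdist (u a) (u b)) by (intros; apply sqdist_pos, Hu; auto).
  set (FU := fun a b => 2 * (U' (sqdist (u a) (u b)) * dcoord c u a b)).
  set (FW := fun a b => 2 * (Derive W (sqdist (u a) (u b)) * dcoord c u a b)).
  assert (FU_anti : forall a b, FU b a = - FU a b)
    by (intros; unfold FU; rewrite sqdist_comm, dcoord_anti; ring).
  assert (FW_anti : forall a b, FW b a = - FW a b)
    by (intros; unfold FW; rewrite sqdist_comm, dcoord_anti; ring).
  replace (grad_V W n u j c) with
    (sum_n_m (fun i => (kron (S i) j - kron i j) * FU (S i) i) 1 (n - 1)
     + (kron n j - kron 1 j) * FU n 1%nat
     + sum_n_m (fun a => sum_n_m (fun b => (kron a j - kron b j) * FW a b) (S a) n) 1 n).
  2:{ rewrite sum_cycle_edges_antisym, sum_pairs_antisym by auto.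
      unfold grad_V, FU, FW. rewrite <- sum_n_m_Rmult_l. ring. }
  unfold V.
  apply (is_derive_plus (fun t => _ + _) (fun t => sum_n_m _ 1 n)).
  apply (is_derive_plus (fun t => sum_n_m _ 1 (n - 1)) (fun t => U _)).
  - apply (is_derive_sum_n_m (fun i t => U (sqdist (shift u j c t (S i)) (shift u j c t i)))).
    intros i Hi. apply is_derive_sqdist_shift, is_derive_U, Hpos; lia.
  - apply is_derive_sqdist_shift, is_derive_U, Hpos; lia.
  - apply (is_derive_sum_n_m
      (fun a t => sum_n_m (fun b => W (sqdist (shift u j c t a) (shift u j c t b))) (S a) n)).
    intros a Ha.
    apply (is_derive_sum_n_m (fun b t => W (sqdist (shift u j c t a) (shift u j c t b)))).
    intros b Hb. apply is_derive_sqdist_shift, Derive_correct, HW, Hpos; lia.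
Qed.

Definition zeta (n : nat) : R := 2 * PI / INR n.

Definition unit_coord (c : bool) (x : R) : R := if c then sin x else cos x.
Definition unit_coord' (c : bool) (x : R) : R := if c then cos x else - sin x.

Lemma unit_coord_diff c x y :
  unit_coord c x - unit_coord c (x + y) =
  unit_coord c x * (1 - cos y) - unit_coord' c x * sin y.
Proof. destruct c; simpl; [rewrite sin_plus | rewrite cos_plus]; ring. Qed.

Lemma trig_dist A B :
  (cos A - cos B) ^ 2 + (sin A - sin B) ^ 2 = (2 * sin ((A - B) / 2)) ^ 2.
Proof.
  set (h := (A - B) / 2).
  replace A with (B + 2 * h) by (unfold h; field).
  rewrite cos_plus, sin_plus, cos_2a_sin, sin_2a.
  pose proof (sin2_cos2 B) as HB. pose proof (sin2_cos2 h) as Hh.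
  unfold Rsqr in HB, Hh.
  replace ((2 * sin h) ^ 2) with (4 * sin h ^ 2 * (sin h * sin h + cos h * cos h))
    by (rewrite Hh; ring).
  transitivity ((sin B * sin B + cos B * cos B)
                * (4 * sin h ^ 2 * (sin h * sin h + cos h * cos h)));
    [ring | rewrite HB; ring].
Qed.

Lemma coord_circ n al c k :
  coord c (circ_config n al k) = al * unit_coord c (INR k * zeta n).
Proof. destruct c; reflexivity. Qed.

Section Circle.
Variable n : nat.
Hypothesis Hn : (2 <= n)%nat.

Lemma INR_n_pos : 0 < INR n.
Proof. apply lt_0_INR; lia. Qed.

Lemma circ_config_periodic al k : circ_config n al (k + n) = circ_config n al k.
Proof.
  pose proof INR_n_pos.
  unfold circ_config. rewrite plus_INR.
  replace ((INR k + INR n) * (2 * PI / INR n)) with (INR k * (2 * PI / INR n) + 2 * PI)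
    by (field; lra).
  now rewrite sin_plus, cos_plus, sin_2PI, cos_2PI, !Rmult_1_r, !Rmult_0_r, Rminus_0_r,
    Rplus_0_r.
Qed.

Lemma circ_cycle_pred al j :
  (1 <= j)%nat -> circ_config n al (cycle_pred n j) = circ_config n al (j + (n - 1)).
Proof.
  intro Hj. unfold cycle_pred. destruct (Nat.eqb_spec j 1) as [->|Hj1].
  - f_equal; lia.
  - replace (j + (n - 1))%nat with ((j - 1) + n)%nat by lia.
    now rewrite circ_config_periodic.
Qed.

Lemma circ_cycle_succ al j :
  circ_config n al (cycle_succ n j) = circ_config n al (j + 1).
Proof.
  unfold cycle_succ. destruct (Nat.eqb_spec j n) as [->|Hjn].
  - now rewrite Nat.add_comm, circ_config_periodic.
  - f_equal; lia.
Qed.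

Lemma cos_zeta m : cos (INR m * zeta n) = 1 - s n m ^ 2 / 2.
Proof.
  pose proof INR_n_pos. unfold s, zeta.
  replace (INR m * (2 * PI / INR n)) with (2 * (INR m * PI / INR n)) by (field; lra).
  rewrite cos_2a_sin. field.
Qed.

Lemma sin_zeta_refl m :
  (m <= n)%nat -> sin (INR (n - m) * zeta n) = - sin (INR m * zeta n).
Proof.
  intro Hm. pose proof INR_n_pos. unfold zeta. rewrite minus_INR by exact Hm.
  replace ((INR n - INR m) * (2 * PI / INR n)) with (- (INR m * (2 * PI / INR n)) + 2 * PI)
    by (field; lra).
  rewrite sin_plus, sin_2PI, cos_2PI, sin_neg. ring.
Qed.

Lemma s_refl m : (m <= n)%nat -> s n (n - m) = s n m.
Proof.
  intro Hm. pose proof INR_n_pos. unfold s. rewrite minus_INR by exact Hm.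
  replace ((INR n - INR m) * PI / INR n) with (PI - INR m * PI / INR n) by (field; lra).
  now rewrite sin_PI_x.
Qed.

Lemma s_pos k : (1 <= k <= n - 1)%nat -> 0 < s n k.
Proof.
  intro Hk. pose proof INR_n_pos. pose proof PI_RGT_0. unfold s.
  assert (1 <= INR k) by (apply (le_INR 1); lia).
  assert (INR k < INR n) by (apply lt_INR; lia).
  assert (0 < sin (INR k * PI / INR n)); [|lra].
  apply sin_gt_0.
  - apply Rdiv_lt_0_compat; nra.
  - apply Rmult_lt_reg_r with (INR n); [lra|].
    unfold Rdiv. rewrite Rmult_assoc, Rinv_l by lra. nra.
Qed.

Lemma sqdist_circ_shift al j m :
  sqdist (circ_config n al j) (circ_config n al (j + m)) = al ^ 2 * s n m ^ 2.
Proof.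
  pose proof INR_n_pos.
  unfold sqdist, circ_config, s; simpl fst; simpl snd.
  set (A := INR j * (2 * PI / INR n)). set (B := INR (j + m) * (2 * PI / INR n)).
  transitivity (al ^ 2 * ((cos A - cos B) ^ 2 + (sin A - sin B) ^ 2)); [ring|].
  rewrite trig_dist.
  replace ((A - B) / 2) with (- (INR m * PI / INR n))
    by (unfold A, B; rewrite plus_INR; field; lra).
  rewrite sin_neg. ring.
Qed.

Lemma dcoord_circ_shift al c j m :
  dcoord c (circ_config n al) j (j + m) =
  al * (unit_coord c (INR j * zeta n) * (s n m ^ 2 / 2)
        - unit_coord' c (INR j * zeta n) * sin (INR m * zeta n)).
Proof.
  unfold dcoord. rewrite !coord_circ, plus_INR, Rmult_plus_distr_r.
  rewrite <- Rmult_minus_distr_l, unit_coord_diff, cos_zeta. f_equal. ring.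
Qed.

Lemma circ_in_Omega al : 0 < al -> in_Omega n (circ_config n al).
Proof.
  intros Hal.
  assert (Hgen : forall a m, (1 <= m <= n - 1)%nat ->
            circ_config n al a <> circ_config n al (a + m)).
  { intros a m Hm E. pose proof (s_pos m Hm).
    assert (Z : sqdist (circ_config n al a) (circ_config n al (a + m)) = 0)
      by (rewrite E; unfold sqdist; ring).
    rewrite sqdist_circ_shift in Z.
    assert (0 < al ^ 2 * s n m ^ 2) by (apply Rmult_lt_0_compat; apply pow2_gt_0; lra).
    lra. }
  intros a b Ha Hb Hab E.
  destruct (Nat.lt_gt_cases a b) as [[Hlt|Hgt] _]; [exact Hab| |].
  - apply (Hgen a (b - a)%nat); [lia|]. now replace (a + (b - a))%nat with b by lia.
  - apply (Hgen b (a - b)%nat); [lia|]. now replace (b + (a - b))%nat with a by lia.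
Qed.

Lemma sum_sin_zeta_symm (g : nat -> R) :
  (forall m, (m <= n)%nat -> g (n - m)%nat = g m) ->
  sum_n_m (fun m => g m * sin (INR m * zeta n)) 1 (n - 1) = 0.
Proof.
  intro Hg.
  set (X := sum_n_m _ 1 (n - 1)).
  assert (E : X = sum_n_m (fun m => - (g m * sin (INR m * zeta n))) 1 (n - 1)).
  { unfold X. rewrite sum_n_m_rev. apply sum_n_m_ext_loc_R.
    intros m Hm. replace (1 + (n - 1) - m)%nat with (n - m)%nat by lia.
    rewrite Hg, sin_zeta_refl by lia. ring. }
  rewrite sum_n_m_Ropp in E. fold X in E. lra.
Qed.

End Circle.

Section Circular_gradient.
Variables (W : R -> R) (n : nat) (al : R) (c : bool) (j : nat).
Hypotheses (Hn : (2 <= n)%nat) (Hal : 0 < al) (Hj : (1 <= j <= n)%nat).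

Let u := circ_config n al.
Let x := INR j * zeta n.

Lemma U'_circ_edge : U' (al ^ 2 * s n 1 ^ 2) = 1 - / (al * s n 1).
Proof.
  pose proof (s_pos n Hn 1 ltac:(lia)).
  unfold U'. replace (al ^ 2 * s n 1 ^ 2) with ((al * s n 1) ^ 2) by ring.
  rewrite sqrt_pow2; [reflexivity | nra].
Qed.

Lemma chain_grad_circ :
  U' (sqdist (u j) (u (cycle_pred n j))) * dcoord c u j (cycle_pred n j)
  + U' (sqdist (u j) (u (cycle_succ n j))) * dcoord c u j (cycle_succ n j) =
  (1 - / (al * s n 1)) * (al * unit_coord c x * s n 1 ^ 2).
Proof.
  pose proof (s_pos n Hn 1 ltac:(lia)).
  (* The neighbours sit at the offsets 1 and n - 1, whose tangential parts cancel. *)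
  unfold dcoord, u. rewrite circ_cycle_pred, circ_cycle_succ by lia.
  fold (dcoord c (circ_config n al) j (j + (n - 1))) (dcoord c (circ_config n al) j (j + 1)).
  rewrite !sqdist_circ_shift, !dcoord_circ_shift by lia.
  rewrite s_refl, (sin_zeta_refl n Hn 1), U'_circ_edge by lia.
  fold x. simpl INR. field. split; lra.
Qed.

Lemma pair_grad_circ :
  sum_n_m (fun k => Derive W (sqdist (u j) (u k)) * dcoord c u j k) 1 n =
  al * unit_coord c x / 2 *
    sum_n_m (fun m => Derive W (al ^ 2 * s n m ^ 2) * s n m ^ 2) 1 (n - 1).
Proof.
  set (f := fun k => Derive W (sqdist (u j) (u k)) * dcoord c u j k).
  rewrite <- (sum_n_m_periodic_shift f n j).
  2:{ intro k. unfold f, dcoord, u. now rewrite circ_config_periodic. }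
  replace (sum_n_m (fun m => f (j + m)%nat) 1 n)
    with (sum_n_m (fun m => f (j + m)%nat) 1 (S (n - 1))) by (f_equal; lia).
  rewrite sum_n_Sm by lia. change plus with Rplus.
  replace (j + S (n - 1))%nat with (j + n)%nat by lia.
  assert (Hdiag : f (j + n)%nat = 0).
  { unfold f, dcoord, u. rewrite circ_config_periodic by lia. ring. }
  rewrite Hdiag, Rplus_0_r.
  rewrite (sum_n_m_ext_loc_R _ (fun m => al * unit_coord c x / 2 *
      (Derive W (al ^ 2 * s n m ^ 2) * s n m ^ 2)
      + - (al * unit_coord' c x) * (Derive W (al ^ 2 * s n m ^ 2) * sin (INR m * zeta n)))).
  2:{ intros m Hm. unfold f, u. rewrite sqdist_circ_shift, dcoord_circ_shift by lia.
      fold x. field. }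
  rewrite sum_n_m_Rplus, !sum_n_m_Rmult_l,
    (sum_sin_zeta_symm n Hn (fun m => Derive W (al ^ 2 * s n m ^ 2))).
  - now rewrite Rmult_0_r, Rplus_0_r.
  - intros m Hm. now rewrite s_refl.
Qed.

Lemma grad_V_circ :
  grad_V W n u j c = 2 * al * s n 1 ^ 2 * unit_coord c x * (1 - Sfun W n al).
Proof.
  pose proof (s_pos n Hn 1 ltac:(lia)).
  unfold grad_V. rewrite chain_grad_circ, pair_grad_circ.
  unfold Sfun. field. lra.
Qed.

End Circular_gradient.

Lemma filterlim_Rmult_r_p_infty c :
  0 < c -> filterlim (fun a => a * c) (Rbar_locally p_infty) (Rbar_locally p_infty).
Proof.
  intro Hc. pose proof (filterlim_Rbar_mult_r c p_infty) as H.
  simpl in H. destruct (Rle_dec 0 c) as [H0|H0]; [|lra].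
  destruct (Rle_lt_or_eq_dec 0 c H0) as [_|E]; [exact H | lra].
Qed.

Lemma filterlim_sq_Rmult_r_p_infty c :
  0 < c -> filterlim (fun a => a ^ 2 * c) (Rbar_locally p_infty) (Rbar_locally p_infty).
Proof.
  intro Hc. apply (filterlim_ge_p_infty (fun a => a * c)).
  - exists 1. intros a Ha.
    replace (a ^ 2 * c) with (a * c + a * (a - 1) * c) by ring.
    assert (0 <= a * (a - 1) * c) by (apply Rmult_le_pos; [apply Rmult_le_pos|]; lra).
    lra.
  - now apply filterlim_Rmult_r_p_infty.
Qed.

Lemma filterlim_Rinv_Rmult_r_0_right c :
  0 < c -> filterlim (fun a => / (a * c)) (at_right 0) (Rbar_locally p_infty).
Proof.
  intro Hc. apply (filterlim_ext (fun a => / a * / c)).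
  { intro a. now rewrite Rinv_mult. }
  apply (filterlim_comp _ _ _ Rinv (fun x => x * / c) _ (Rbar_locally p_infty)).
  - exact filterlim_Rinv_0_right.
  - apply filterlim_Rmult_r_p_infty, Rinv_0_lt_compat, Hc.
Qed.

Lemma exists_level_between_limits (f : R -> R) (y : R) :
  0 < y -> (forall a, 0 < a -> continuous f a) ->
  filterlim f (at_right 0) (Rbar_locally p_infty) ->
  filterlim f (Rbar_locally p_infty) (locally 0) ->
  exists a, 0 < a /\ f a = y.
Proof.
  intros Hy Hf Hlim0 Hliminf.
  destruct (Hlim0 (fun z => y < z) (ex_intro _ y (fun z Hz => Hz))) as [e He].
  set (a0 := e / 2).
  assert (Ha0 : 0 < a0) by (unfold a0; pose proof (cond_pos e); lra).
  assert (Hfa0 : y < f a0).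
  { apply He; [|exact Ha0]. change (Rabs (a0 - 0) < e).
    rewrite Rminus_0_r, Rabs_pos_eq by lra. unfold a0; pose proof (cond_pos e); lra. }
  assert (Hsmall : locally 0 (fun z => z < y)).
  { exists (mkposreal y Hy). intros z Hz. change (Rabs (z - 0) < y) in Hz.
    pose proof (Rle_abs (z - 0)); lra. }
  destruct (Hliminf _ Hsmall) as [M HM].
  set (b0 := Rmax a0 M + 1).
  assert (Hab : a0 < b0) by (unfold b0; pose proof (Rmax_l a0 M); lra).
  assert (Hfb0 : f b0 < y) by (apply HM; unfold b0; pose proof (Rmax_r a0 M); lra).
  destruct (Ranalysis5.IVT_interv (fun z => y - f z) a0 b0) as [z [Hz Ez]]; try lra.
  - intros a Ha. apply continuity_pt_minus; [apply continuity_pt_const; now intros ? ?|].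
    apply continuity_pt_filterlim, Hf. lra.
  - exists z. split; lra.
Qed.

Section Sfun_analysis.
Variables (n : nat) (W : R -> R).
Hypothesis Hn : (2 <= n)%nat.

Lemma s_sq_le_4 k : s n k ^ 2 <= 4.
Proof. unfold s. destruct (SIN_bound (INR k * PI / INR n)). nra. Qed.

Lemma Sfun_ge_inv a :
  0 < a -> (forall k, Derive W (a ^ 2 * s n k ^ 2) * s n k ^ 2 <= 0) ->
  / (a * s n 1) <= Sfun W n a.
Proof.
  intros Ha Hk. pose proof (s_pos n Hn 1 ltac:(lia)).
  assert (sum_n_m (fun k => Derive W (a ^ 2 * s n k ^ 2) * s n k ^ 2) 1 (n - 1) <= 0).
  { rewrite <- (sum_n_m_eq0 (fun _ => 0) 1 (n - 1)) by auto. now apply sum_n_m_le. }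
  assert (0 < / (2 * s n 1 ^ 2)) by (apply Rinv_0_lt_compat; nra).
  unfold Sfun. nra.
Qed.

Lemma near0_Derive_W_terms_nonpos :
  filterlim (fun x => - Derive W x) (at_right 0) (Rbar_locally p_infty) ->
  at_right 0 (fun a => forall k, Derive W (a ^ 2 * s n k ^ 2) * s n k ^ 2 <= 0).
Proof.
  intro HdW0.
  destruct (HdW0 (fun z => 0 < z) (ex_intro _ 0 (fun z Hz => Hz))) as [d Hd].
  pose proof (cond_pos d).
  assert (He : 0 < Rmin 1 (d / 4)) by (apply Rmin_pos; lra).
  exists (mkposreal _ He). intros a Ha Ha0 k.
  change (Rabs (a - 0) < Rmin 1 (d / 4)) in Ha. rewrite Rminus_0_r, Rabs_pos_eq in Ha by lra.
  pose proof (Rmin_l 1 (d / 4)). pose proof (Rmin_r 1 (d / 4)).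
  pose proof (s_sq_le_4 k). pose proof (pow2_ge_0 (s n k)).
  destruct (Req_dec (s n k ^ 2) 0) as [E|E]; [rewrite E; lra|].
  assert (Hball : ball 0 d (a ^ 2 * s n k ^ 2)).
  { change (Rabs (a ^ 2 * s n k ^ 2 - 0) < d).
    rewrite Rminus_0_r, Rabs_pos_eq by nra. nra. }
  assert (0 < a ^ 2 * s n k ^ 2) by (apply Rmult_lt_0_compat; [apply pow2_gt_0|]; lra).
  specialize (Hd _ Hball ltac:(assumption)). unfold filtermap in Hd. nra.
Qed.

Lemma Sfun_lim_0_right :
  filterlim (fun x => - Derive W x) (at_right 0) (Rbar_locally p_infty) ->
  filterlim (Sfun W n) (at_right 0) (Rbar_locally p_infty).
Proof.
  intro HdW0.
  apply (filterlim_ge_p_infty (fun a => / (a * s n 1))).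
  - apply (filter_imp (fun a => 0 < a /\
             forall k, Derive W (a ^ 2 * s n k ^ 2) * s n k ^ 2 <= 0)).
    + intros a [Ha Hk]. now apply Sfun_ge_inv.
    + apply filter_and; [|now apply near0_Derive_W_terms_nonpos].
      exists (mkposreal 1 Rlt_0_1). now intros.
  - apply filterlim_Rinv_Rmult_r_0_right, s_pos; lia.
Qed.

Lemma Sfun_lim_p_infty :
  filterlim (Derive W) (Rbar_locally p_infty) (locally 0) ->
  filterlim (Sfun W n) (Rbar_locally p_infty) (locally 0).
Proof.
  intro HdWinf. change (is_lim (Sfun W n) p_infty 0). unfold Sfun.
  pose proof (s_pos n Hn 1 ltac:(lia)).
  replace (Finite 0) with (Finite (0 - / (2 * s n 1 ^ 2) * 0)) by (f_equal; ring).
  apply is_lim_minus'.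
  - apply (is_lim_inv (fun a => a * s n 1) p_infty p_infty); [|discriminate].
    now apply filterlim_Rmult_r_p_infty.
  - apply (is_lim_scal_l _ _ _ (Finite 0)).
    replace 0 with (sum_n_m (fun _ => 0) 1 (n - 1)) by (apply sum_n_m_eq0; auto).
    apply (is_lim_sum_n_m (fun k a => Derive W (a ^ 2 * s n k ^ 2) * s n k ^ 2)).
    intros k Hk.
    replace (Finite 0) with (Rbar_mult 0 (s n k ^ 2)) by (simpl; f_equal; ring).
    apply (is_lim_scal_r (fun a => Derive W (a ^ 2 * s n k ^ 2))).
    assert (Hk2 : 0 < s n k ^ 2) by (apply pow2_gt_0, Rgt_not_eq, s_pos; lia).
    exact (filterlim_comp _ _ _ _ _ _ _ _ (filterlim_sq_Rmult_r_p_infty _ Hk2) HdWinf).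
Qed.

Lemma continuous_Sfun a :
  (forall x, 0 < x -> ex_derive (Derive W) x) -> 0 < a -> continuous (Sfun W n) a.
Proof.
  intros HW2 Ha. pose proof (s_pos n Hn 1 ltac:(lia)).
  apply (ex_derive_continuous (K:=R_AbsRing) (V:=R_NormedModule)).
  unfold Sfun. apply (ex_derive_minus (fun x => / (x * s n 1))).
  - auto_derive. nra.
  - apply ex_derive_scal.
    eexists.
    apply (is_derive_sum_n_m (fun k x => Derive W (x ^ 2 * s n k ^ 2) * s n k ^ 2)).
    intros k Hk. apply Derive_correct, ex_derive_mult; [|apply ex_derive_const].
    apply (ex_derive_comp (Derive W) (fun x => x ^ 2 * s n k ^ 2)).
    + apply HW2, Rmult_lt_0_compat; [nra|]. apply pow2_gt_0, Rgt_not_eq, s_pos; lia.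
    + auto_derive. exact I.
Qed.

End Sfun_analysis.

Theorem corollary2 (n : nat) (W : R -> R)
  (Hn : (2 <= n)%nat)
  (* W in C^2((0,oo)) *)
  (HW1 : forall x, 0 < x -> ex_derive W x)
  (HW2 : forall x, 0 < x -> ex_derive (Derive W) x)
  (HW2c : forall x, 0 < x -> continuous (Derive_n W 2) x)
  (* lim_{x->0} W = lim_{x->0} (-W') = +oo *)
  (HW0 : filterlim W (at_right 0) (Rbar_locally p_infty))
  (HdW0 : filterlim (fun x => - Derive W x) (at_right 0) (Rbar_locally p_infty))
  (* lim_{x->oo} W = lim_{x->oo} W' = 0 *)
  (HWinf : filterlim W (Rbar_locally p_infty) (locally 0))
  (HdWinf : filterlim (Derive W) (Rbar_locally p_infty) (locally 0)) :
  filterlim (Sfun W n) (at_right 0) (Rbar_locally p_infty) /\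
  filterlim (Sfun W n) (Rbar_locally p_infty) (locally 0) /\
  (exists alpha, 0 < alpha /\ Sfun W n alpha = 1) /\
  (forall alpha, 0 < alpha -> Sfun W n alpha = 1 ->
     in_Omega n (circ_config n alpha) /\
     is_critical_point W n (circ_config n alpha)).
Proof.
  pose proof (Sfun_lim_0_right n W Hn HdW0) as Hlim0.
  pose proof (Sfun_lim_p_infty n W Hn HdWinf) as Hliminf.
  split; [exact Hlim0|]. split; [exact Hliminf|]. split.
  { apply exists_level_between_limits; auto; [lra|].
    intros a Ha. now apply continuous_Sfun. }
  intros al Hal HS. pose proof (circ_in_Omega n Hn al Hal) as Homega.
  split; [exact Homega|].
  intros j c Hj.
  replace 0 with (grad_V W n (circ_config n al) j c) at 2.
  - now apply is_derive_V_shift.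
  - rewrite grad_V_circ, HS by auto. ring.
Qed.
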